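(* Let $(p_{nm})_{n,m\in\{0,1,2\}}$ be a probability vector with $p_{01}=p_{02}=0$, let $\mathcal{N}$ be the qutrit Pauli channel with these probabilities, and let the initial shared state be $\sigma=\sum_{n,m}p_{nm}|\Phi^{n,m}\rangle\langle\Phi^{n,m}|$ (fidelity $p_{00}$). Let $F_N$ denote the fidelity $\langle\Phi^{0,0}|\rho_N|\Phi^{0,0}\rangle$ of the shared state $\rho_N$ after $N$ successful rounds of the single-carrier protocol (described in the context) without any pre-processing. Then $F_N\to 1$ as $N\to\infty$ if and only if $$p_{00}>\max\{p_{10}+p_{11}+p_{12},\;p_{20}+p_{21}+p_{22}\}.$$
   Context: Let $\omega=e^{2\pi i/3}$ and on $\mathbb{C}^3$ with basis $|0\rangle,|1\rangle,|2\rangle$ define $X|j\rangle=|(j+1)\bmod 3\rangle$, $Z|j\rangle=\omega^j|j\rangle$. The two-qutrit Bell states are $|\Phi^{n,m}\rangle=\frac{1}{\sqrt3}\sum_{j=0}^2\omega^{mj}|j,(j+n)\bmod 3\rangle$, $n,m\in\{0,1,2\}$. The qutrit Pauli channel with probabilities $p_{nm}$ is $\mathcal{N}(\rho)=\sum_{n,m}p_{nm}Z^mX^n\rho X^{-n}Z^{-m}$; sending one half of $|\Phi^{0,0}\rangle$ through it gives $\sigma=\sum p_{nm}|\Phi^{n,m}\rangle\langle\Phi^{n,m}|$. Single-carrier protocol round: Alice (holding qutrit $A$ of the shared pair) prepares a carrier qutrit $T$ in $|0\rangle$ and applies $U_{CN}|j\rangle_A|k\rangle_T=|j\rangle_A|(j+k)\bmod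 3\rangle_T$; the carrier is sent to Bob through the same channel $\mathcal{N}$; Bob (holding qutrit $B$) applies $U_{CN'}|j\rangle_B|k\rangle_T=|j\rangle_B|(k-j)\bmod 3\rangle_T$ and measures $T$ in the computational basis; the round succeeds if the outcome is $0$, in which case the post-measurement state of $AB$ is kept. Successive rounds act on the kept state of the previous round, each with a fresh carrier sent through $\mathcal{N}$. *)

From HB Require Import structures.
From mathcomp Require Import all_boot all_order all_algebra.
From mathcomp Require Import complex.
From mathcomp Require Import all_classical all_reals topology normedtype sequences.
Set Implicit Arguments. Unset Strict Implicit. Unset Printing Implicit Defensive.
Import Order.TTheory GRing.Theory Num.Theory.
Local Open Scope ring_scope.

(* Qutrit index set {0,1,2} = 'I_3, with addition/subtraction modulo 3
   given by the Z/3Z structure of 'I_3. *)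
Notation I3 := 'I_3.

Section Qutrit.
Variable R : realType.
Local Notation C := R[i].
Definition rC (x : R) : C := Complex x 0.

(* operators on C^K written as matrices indexed by a finite basis type K:
   op x y = <x| op |y> *)
Definition op (K : finType) := K -> K -> C.

Definition opmul (K : finType) (A B : op K) : op K :=
  fun x y => \sum_(z : K) A x z * B z y.
Definition opadj (K : finType) (A : op K) : op K :=
  fun x y => conjc (A y x).
Definition conjop (K : finType) (U rho : op K) : op K :=
  opmul (opmul U rho) (opadj U).
Definition optr (K : finType) (A : op K) : C := \sum_(x : K) A x x.
Definition opid (K : finType) : op K := fun x y => (x == y)%:R.
Definition oppow (K : finType) (A : op K) (n : nat) : op K :=
  iter n (opmul A) (@opid K).

(* omega = e^{2 pi i / 3} = -1/2 + i sqrt(3)/2 *)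
Definition omega : C := Complex (- 1 / 2) (Num.sqrt 3 / 2).

Definition Xq : op I3 := fun i j => (i == j + 1)%:R.
Definition Zq : op I3 := fun i j => (i == j)%:R * omega ^+ (j : nat).

(* two-qutrit system AB, basis (a,b) *)
Definition I33 := (I3 * I3)%type.
Definition bell (n m : I3) : I33 -> C := fun ab =>
  rC (Num.sqrt 3)^-1 * (ab.2 == ab.1 + n)%:R * omega ^+ ((m : nat) * (ab.1 : nat)).
Definition proj (K : finType) (v : K -> C) : op K := fun x y => v x * conjc (v y).
(* fidelity <Phi^{0,0}| rho |Phi^{0,0}> (real part; the value is real) *)
Definition fidelity (rho : op I33) : R :=
  complex.Re (\sum_(x : I33) \sum_(y : I33) conjc (bell 0 0 x) * rho x y * bell 0 0 y).

Variable p : I3 -> I3 -> R.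

Definition sigma0 : op I33 :=
  fun x y => \sum_(n : I3) \sum_(m : I3) rC (p n m) * proj (bell n m) x y.

(* three-qutrit system A,B,T with basis ((a,b),t) *)
Definition I333 := (I33 * I3)%type.
Definition onT (P : op I3) : op I333 :=
  fun x y => (x.1 == y.1)%:R * P x.2 y.2.
Definition pauliT (rho : op I333) : op I333 :=
  fun x y => \sum_(n : I3) \sum_(m : I3)
    rC (p n m) * conjop (onT (opmul (oppow Zq m) (oppow Xq n))) rho x y.
Definition UCN : op I333 :=
  fun x y => (x == (y.1, y.2 + y.1.1))%:R.
Definition UCN' : op I333 :=
  fun x y => (x == (y.1, y.2 - y.1.2))%:R.
Definition attach0 (rho : op I33) : op I333 :=
  fun x y => rho x.1 y.1 * ((x.2 == 0) && (y.2 == 0))%:R.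
Definition Pi0 : op I333 := onT (fun i j => ((i == 0) && (j == 0))%:R).
Definition ptrT (rho : op I333) : op I33 :=
  fun x y => \sum_(t : I3) rho (x, t) (y, t).
(* normalization by the trace (success probability) *)
Definition normalize (K : finType) (rho : op K) : op K :=
  fun x y => rho x y / optr rho.

Definition round (rho : op I33) : op I33 :=
  normalize (ptrT (conjop Pi0
    (conjop UCN' (pauliT (conjop UCN (attach0 rho)))))).

Definition rhoN (N : nat) : op I33 := iter N round sigma0.
Definition FN (N : nat) : R := fidelity (rhoN N).

End Qutrit.

(** Every gate of a round acts on the computational basis by a permutation
    with phases, so a successful round multiplies the density matrix entrywise
    by a fixed kernel [round_kernel] and renormalises.  With
    [p_{01} = p_{02} = 0], both [sigma0] and [round_kernel] are constant on
    the support of [|Phi^{0,0}>], and on the diagonal they only see the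
    marginal [pX n = sum_m p_{nm}] of the X-error.  Hence
    [F_N = pX 0 ^ (N+1) / sum_n pX n ^ (N+1)], which tends to [1] exactly
    when [pX 0] strictly dominates [pX 1] and [pX 2]. *)

From Pilot Require Import Defs.
From HB Require Import structures.
From mathcomp Require Import all_boot all_order all_algebra.
From mathcomp Require Import complex.
From mathcomp Require Import all_classical all_reals topology normedtype sequences.
From mathcomp Require Import ring lra.
Import Order.TTheory GRing.Theory Num.Theory.
Import numFieldNormedType.Exports.
Local Open Scope ring_scope.
Local Open Scope classical_set_scope.
Set Implicit Arguments. Unset Strict Implicit. Unset Printing Implicit Defensive.

Section PowerShare.
Variable R : realType.

Lemma sum_powS_gt0 (I : finType) (u : I -> R) k :
  (forall i, 0 <= u i) -> \sum_i u i = 1 -> 0 < \sum_i u i ^+ k.+1.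
Proof.
move=> u_ge0 u_sum1; rewrite lt0r sumr_ge0 ?andbT => [|i _]; last exact: exprn_ge0.
apply/negP => /eqP S_eq0.
have upow_eq0 := psumr_eq0P (fun i _ => exprn_ge0 k.+1 (u_ge0 i)) S_eq0.
suff : \sum_i u i = 0 by rewrite u_sum1; apply/eqP; rewrite oner_neq0.
apply: big1 => i _; apply/eqP.
by have /eqP := upow_eq0 i isT; rewrite expf_eq0 => /andP[].
Qed.

Lemma power_share_le_half (I : finType) (u : I -> R) (i0 j : I) k :
  (forall i, 0 <= u i) -> \sum_i u i = 1 -> j != i0 -> u i0 <= u j ->
  u i0 ^+ k.+1 / \sum_i u i ^+ k.+1 <= 1 / 2.
Proof.
move=> u_ge0 u_sum1 ji0 u0_le_uj; have S_gt0 := sum_powS_gt0 k u_ge0 u_sum1.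
rewrite ler_pdivrMr // (bigD1 i0) // (bigD1 j) //=.
have : u i0 ^+ k.+1 <= u j ^+ k.+1 by apply: lerXn2r; rewrite ?nnegrE.
have : 0 <= \sum_(i | (i != i0) && (i != j)) u i ^+ k.+1.
  by apply: sumr_ge0 => i _; exact: exprn_ge0.
lra.
Qed.

Lemma cvg_power_share (I : finType) (u : I -> R) (i0 : I) :
  (forall i, 0 <= u i) -> \sum_i u i = 1 ->
  ((fun N => u i0 ^+ N.+1 / \sum_i u i ^+ N.+1) @ \oo --> (1 : R)) <->
  (forall i, i != i0 -> u i < u i0).
Proof.
move=> u_ge0 u_sum1; split=> [share_cvg j ji0|u_dom].
  rewrite ltNge; apply/negP => u0_le_uj.
  have [|N _ /(_ N (leqnn N))] := @cvgr_gt R nat \oo _ _ 1 share_cvg (1 / 2); first lra.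
  have := power_share_le_half N u_ge0 u_sum1 ji0 u0_le_uj; rewrite /=; lra.
have u0_gt0 : 0 < u i0.
  rewrite ltNge; apply/negP => u0_le0.
  have : \sum_i u i <= \sum_(i : I) 0.
    apply: ler_sum => i _; have [->|/u_dom ui_lt] := eqVneq i i0; first by [].
    exact: le_trans (ltW ui_lt) u0_le0.
  by rewrite u_sum1 big1_eq ler10.
pose r i := u i / u i0.
have -> : (fun N => u i0 ^+ N.+1 / \sum_i u i ^+ N.+1) =
          (fun N => (\sum_i r i ^+ N.+1)^-1).
  apply/funext => N; rewrite [in RHS](eq_bigr (fun i => u i ^+ N.+1 / u i0 ^+ N.+1)).
    by rewrite -mulr_suml invfM invrK mulrC.
  by move=> i _; rewrite expr_div_n.
have r_cvg : (fun N => \sum_i r i ^+ N.+1) @ \oo --> (\sum_i (i == i0)%:R : R).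
  apply: (cvg_big add_continuous) => // i _; have [->|ii0] := eqVneq i i0.
    rewrite /r divff ?gt_eqF //; under eq_cvg do rewrite expr1n; exact: cvg_cst.
  rewrite (cvg_shiftS (fun N => r i ^+ N)); apply: cvg_expr.
  have ri_ge0 : 0 <= r i by rewrite divr_ge0 // ltW.
  by rewrite ger0_norm // ltr_pdivrMr // mul1r u_dom.
rewrite (bigD1 i0) //= eqxx big1 ?addr0 in r_cvg => [|i /negbTE ->] //.
by rewrite -[1]invr1; apply: cvgV r_cvg; rewrite oner_neq0.
Qed.

End PowerShare.

Section Qutrit.
Local Open Scope complex_scope.
Variable R : realType.
Local Notation C := R[i].
Local Notation w := (omega R).

Lemma rCE (x : R) : rC x = x%:C. Proof. by []. Qed.

Lemma sum_delta_l (K : finType) (x : K) (g : K -> C) :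
  \sum_z (z == x)%:R * g z = g x.
Proof.
by rewrite (bigD1 x) //= eqxx mul1r big1 ?addr0 // => z /negbTE ->; rewrite mul0r.
Qed.

Lemma sum_delta_r (K : finType) (x : K) (g : K -> C) :
  \sum_z g z * (z == x)%:R = g x.
Proof. by rewrite -[RHS](sum_delta_l x); apply: eq_bigr => z _; rewrite mulrC. Qed.

Lemma ReC (x : R) : complex.Re x%:C = x. Proof. by []. Qed.

Lemma realCM (a b : R) : (a * b)%:C = a%:C * b%:C :> C.
Proof. exact: rmorphM. Qed.

Lemma conjcM (a b : C) : conjc (a * b) = conjc a * conjc b.
Proof. exact: rmorphM. Qed.

Lemma natr_andb (a b : bool) : ((a && b)%:R : C) = a%:R * b%:R.
Proof. by rewrite -mulnb natrM. Qed.

Lemma conjop_monomial (K : finType) (U A : op R K) (f g : K -> K) (c : K -> C) x y :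
  cancel f g -> cancel g f -> (forall x y, U x y = (x == f y)%:R * c x) ->
  conjop U A x y = c x * A (g x) (g y) * conjc (c y).
Proof.
move=> fK gK U_mono; have f_eq z z' : (z == f z') = (z' == g z).
  by rewrite eq_sym (can2_eq fK gK).
rewrite /conjop /opmul /opadj.
have row_x z : \sum_v U x v * A v z = c x * A (g x) z.
  rewrite -(sum_delta_l (g x) (fun v => c x * A v z)).
  by apply: eq_bigr => v _; rewrite U_mono f_eq mulrA.
under eq_bigr => z _ do rewrite row_x U_mono rmorphM rmorph_nat f_eq mulrCA.
by rewrite (sum_delta_l (g y) (fun z => c x * A (g x) z * conjc (c y))).
Qed.

Lemma conjop_UCN (A : op R I333) x y :
  conjop (UCN R) A x y = A (x.1, x.2 - x.1.1) (y.1, y.2 - y.1.1).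
Proof.
rewrite (@conjop_monomial _ _ _ (fun y => (y.1, y.2 + y.1.1))
  (fun x => (x.1, x.2 - x.1.1)) (fun _ => 1)) ?rmorph1 ?mul1r ?mulr1 //.
- by case=> -[a b] t /=; rewrite addrK.
- by case=> -[a b] t /=; rewrite subrK.
- by move=> u v; rewrite mulr1.
Qed.

Lemma conjop_UCN' (A : op R I333) x y :
  conjop (UCN' R) A x y = A (x.1, x.2 + x.1.2) (y.1, y.2 + y.1.2).
Proof.
rewrite (@conjop_monomial _ _ _ (fun y => (y.1, y.2 - y.1.2))
  (fun x => (x.1, x.2 + x.1.2)) (fun _ => 1)) ?rmorph1 ?mul1r ?mulr1 //.
- by case=> -[a b] t /=; rewrite subrK.
- by case=> -[a b] t /=; rewrite addrK.
- by move=> u v; rewrite mulr1.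
Qed.

Lemma ptrT_conjop_Pi0 (A : op R I333) x y :
  ptrT (conjop (Pi0 R) A) x y = A (x, 0) (y, 0).
Proof.
have Pi0_diag u v : Pi0 R u v = (u == v)%:R * (u.2 == 0)%:R.
  case: u v => [u1 u2] [v1 v2]; rewrite /Pi0 /onT xpair_eqE !natr_andb /=.
  have [->|_] := eqVneq u2 0; last by rewrite !mul0r !mulr0.
  by rewrite (eq_sym 0 v2) mul1r mulr1.
rewrite /ptrT -(sum_delta_l 0 (fun t => A (x, t) (y, t))); apply: eq_bigr => t _.
rewrite (@conjop_monomial _ _ _ id id (fun u => (u.2 == 0)%:R)) //= rmorph_nat.
by case: eqP; rewrite ?mul1r ?mulr1 ?mul0r.
Qed.

Lemma oppow_Xq k (i j : I3) : oppow (Xq R) k i j = (i == j + k%:R)%:R.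
Proof.
elim: k i j => [|k IHk] i j; first by rewrite addr0.
rewrite /oppow iterS -/(oppow (Xq R) k) /opmul /Xq.
under eq_bigr => z _ do rewrite IHk -subr_eq eq_sym.
by rewrite sum_delta_l mulrSr addrA subr_eq.
Qed.

Lemma oppow_Zq k (i j : I3) : oppow (Zq R) k i j = (i == j)%:R * w ^+ (k * j).
Proof.
elim: k i j => [|k IHk] i j; first by rewrite mul0n expr0 mulr1.
rewrite /oppow iterS -/(oppow (Zq R) k) /opmul /Zq.
under eq_bigr => z _ do rewrite IHk eq_sym -mulrA.
rewrite (sum_delta_l i (fun z => w ^+ z * ((z == j)%:R * w ^+ (k * j)))).
by case: eqP => [->|]; rewrite ?mul0r ?mulr0 // !mul1r -exprD mulSn.
Qed.

Lemma weyl_opE (n m i j : I3) :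
  opmul (oppow (Zq R) m) (oppow (Xq R) n) i j = (i == j + n)%:R * w ^+ (m * i).
Proof.
rewrite /opmul; under eq_bigr => z _ do rewrite oppow_Zq oppow_Xq natr_Zp eq_sym -mulrA.
by rewrite (sum_delta_l i (fun z => w ^+ (m * z) * (z == j + n)%:R)) mulrC.
Qed.

Lemma conjop_onT_weyl (n m : I3) (A : op R I333) x y :
  conjop (onT (opmul (oppow (Zq R) m) (oppow (Xq R) n))) A x y =
  w ^+ (m * x.2) * A (x.1, x.2 - n) (y.1, y.2 - n) * conjc (w ^+ (m * y.2)).
Proof.
rewrite (@conjop_monomial _ _ _ (fun y => (y.1, y.2 + n)) (fun x => (x.1, x.2 - n))
  (fun x => w ^+ (m * x.2))) //.
- by case=> u t /=; rewrite addrK.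
- by case=> u t /=; rewrite subrK.
- by case=> [u1 u2] [v1 v2]; rewrite /onT weyl_opE xpair_eqE natr_andb mulrA.
Qed.

Lemma omegaX_conj k : w ^+ k * conjc (w ^+ k) = 1.
Proof.
have sqrt3_sqr : Num.sqrt (3 : R) ^+ 2 = 3 by rewrite sqr_sqrtr.
suff w_conj : w * conjc w = 1 by rewrite rmorphXn -exprMn w_conj expr1n.
apply/eqP; rewrite eq_complex /=; apply/andP; split; apply/eqP; last by field.
by transitivity ((1 + Num.sqrt (3 : R) ^+ 2) / 4); [field | rewrite sqrt3_sqr; field].
Qed.

Lemma inv_sqrt3_sqrC : (Num.sqrt 3)^-1%:C * (Num.sqrt 3)^-1%:C = 3^-1%:C :> C.
Proof. by rewrite -rmorphM -invfM -expr2 sqr_sqrtr. Qed.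

Definition hadamard (K : finType) (A M : op R K) : op R K := fun x y => A x y * M x y.
Definition hadamardX (K : finType) (M : op R K) N : op R K := fun x y => M x y ^+ N.

Lemma normalize_hadamard_normalize (K : finType) (A M : op R K) :
  optr A != 0 -> normalize (hadamard (normalize A) M) = normalize (hadamard A M).
Proof.
move=> trA_neq0; apply/funext => x; apply/funext => y.
rewrite /normalize /hadamard.
have -> : optr (fun z z' => A z z' / optr A * M z z') =
          optr (fun z z' => A z z' * M z z') / optr A.
  by rewrite /optr mulr_suml; apply: eq_bigr => z _; rewrite mulrAC.
have [->|trAM_neq0] := eqVneq (optr (fun z z' => A z z' * M z z')) 0.
  by rewrite mul0r !invr0 !mulr0.
by field; rewrite trA_neq0 trAM_neq0.
Qed.

Lemma iter_normalize_hadamard (K : finType) (A M : op R K) N :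
  optr A = 1 -> (forall k, optr (hadamard A (hadamardX M k)) != 0) ->
  iter N (fun B => normalize (hadamard B M)) A = normalize (hadamard A (hadamardX M N)).
Proof.
move=> trA1 tr_neq0; elim: N => [|N IHN].
  have -> : hadamard A (hadamardX M 0) = A.
    by apply/funext => x; apply/funext => y; rewrite /hadamard /hadamardX mulr1.
  by apply/funext => x; apply/funext => y; rewrite /normalize trA1 divr1.
rewrite iterS IHN normalize_hadamard_normalize //; congr normalize.
by apply/funext => x; apply/funext => y; rewrite /hadamard /hadamardX exprSr mulrA.
Qed.

Definition bell_kernel (c : I3 -> I3 -> C) (f : I33 -> I3) : op R I33 := fun x y =>
  \sum_n \sum_m c n m * ((x.2 - x.1 == n) && (y.2 - y.1 == n))%:R *
    (w ^+ (m * f x) * conjc (w ^+ (m * f y))).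

Lemma bell_kernel_diag c f x : bell_kernel c f x x = \sum_m c (x.2 - x.1) m.
Proof.
rewrite /bell_kernel -(sum_delta_r (x.2 - x.1) (fun n => \sum_m c n m)).
apply: eq_bigr => n _; rewrite big_distrl; apply: eq_bigr => m _.
by rewrite andbb omegaX_conj mulr1 eq_sym.
Qed.

Lemma bell_kernel_bell c f (a a' : I3) : (forall m, m != 0 -> c 0 m = 0) ->
  bell_kernel c f (a, a) (a', a') = c 0 0.
Proof.
move=> c0_pure; pose phase m := w ^+ (m * f (a, a)) * conjc (w ^+ (m * f (a', a'))).
transitivity (\sum_m c 0 m * phase m).
  rewrite -(sum_delta_l 0 (fun n => \sum_m c n m * phase m)) /bell_kernel /= !subrr.
  apply: eq_bigr => n _; rewrite big_distrr; apply: eq_bigr => m _.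
  by rewrite andbb eq_sym mulrAC [LHS]mulrC.
rewrite (bigD1 0) //= big1 => [|m /c0_pure ->]; last by rewrite mul0r.
by rewrite addr0 /phase !mul0n expr0 conjc1 !mulr1.
Qed.

Lemma sum_I33 (F : I33 -> C) : \sum_x F x = \sum_a \sum_b F (a, b).
Proof. by rewrite pair_bigA; apply: eq_bigr => -[a b] _. Qed.

Lemma sum_I33_diag (F : I33 -> C) : \sum_x (x.2 == x.1)%:R * F x = \sum_a F (a, a).
Proof. by rewrite sum_I33; apply: eq_bigr => a _; rewrite sum_delta_l. Qed.

Lemma sum_I33_diff (g : I3 -> C) : \sum_(x : I33) g (x.2 - x.1) = (\sum_n g n) *+ 3.
Proof.
transitivity (\sum_(a : I3) \sum_n g n); last by rewrite sumr_const card_ord.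
rewrite sum_I33; apply: eq_bigr => a _ /=.
by rewrite (reindex_inj (addIr a)); apply: eq_bigr => n _; rewrite addrK.
Qed.

Lemma fidelityE (rho : op R I33) :
  fidelity rho = complex.Re (3^-1%:C * \sum_a \sum_a' rho (a, a) (a', a')).
Proof.
have bell00E x : bell R 0 0 x = (Num.sqrt 3)^-1%:C * (x.2 == x.1)%:R.
  by rewrite /bell addr0 mul0n expr0 mulr1.
have summandE x y : conjc (bell R 0 0 x) * rho x y * bell R 0 0 y =
    (x.2 == x.1)%:R * ((y.2 == y.1)%:R * (3^-1%:C * rho x y)).
  by rewrite !bell00E conjcM conjc_nat conjc_real -inv_sqrt3_sqrC; ring.
rewrite /fidelity; under eq_bigr => x _ do under eq_bigr => y _ do rewrite summandE.
under eq_bigr => x _ do rewrite -big_distrr /= sum_I33_diag.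
by rewrite sum_I33_diag mulr_sumr; under [in RHS]eq_bigr do rewrite mulr_sumr.
Qed.

Variable p : I3 -> I3 -> R.

Definition pX n := \sum_m p n m.

Definition round_kernel := bell_kernel (fun n m => (p n m)%:C) snd.

Lemma sigma0_bell_kernel : sigma0 p = bell_kernel (fun n m => (p n m / 3)%:C) fst.
Proof.
apply/funext => x; apply/funext => y; rewrite /sigma0 /bell_kernel.
apply: eq_bigr => n _; apply: eq_bigr => m _.
rewrite /Defs.proj /bell !rCE !conjcM conjc_nat conjc_real natr_andb !subr_eq.
by rewrite ![n + _]addrC realCM -inv_sqrt3_sqrC; ring.
Qed.

Lemma round_hadamard rho : round p rho = normalize (hadamard rho round_kernel).
Proof.
congr normalize; apply/funext => x; apply/funext => y.
rewrite ptrT_conjop_Pi0 conjop_UCN' /= /pauliT /round_kernel /bell_kernel /hadamard.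
rewrite big_distrr; apply: eq_bigr => n _; rewrite big_distrr; apply: eq_bigr => m _.
rewrite conjop_onT_weyl conjop_UCN /attach0 /= !add0r add0n !modn_small ?ltn_ord //.
by rewrite -!addrA ![- n + _]addrC !addrA !subr_eq0 rCE; ring.
Qed.

Lemma optr_sigma0_kernelX N :
  optr (hadamard (sigma0 p) (hadamardX round_kernel N)) = (\sum_n pX n ^+ N.+1)%:C.
Proof.
rewrite /optr /hadamard /hadamardX sigma0_bell_kernel /round_kernel.
under eq_bigr do rewrite !bell_kernel_diag.
have := sum_I33_diff (fun n => (\sum_m (p n m / 3)%:C) * (\sum_m (p n m)%:C) ^+ N).
rewrite /= => ->; rewrite rmorph_sum -sumrMnl; apply: eq_bigr => n _.
rewrite -!rmorph_sum -rmorphXn -rmorphM -rmorphMn -mulr_suml /pX.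
by congr (_%:C); rewrite exprS -mulr_natr; field.
Qed.

Hypothesis p_ge0 : forall n m, 0 <= p n m.
Hypothesis pX_sum1 : \sum_n pX n = 1.
Hypothesis p0_pure : forall m, m != 0 -> p 0 m = 0.

Lemma pX_ge0 n : 0 <= pX n.
Proof. exact: sumr_ge0. Qed.

Lemma pX0 : pX 0 = p 0 0.
Proof. by rewrite /pX (bigD1 0) //= big1 ?addr0 // => m /p0_pure. Qed.

Lemma rhoN_hadamard N :
  rhoN p N = normalize (hadamard (sigma0 p) (hadamardX round_kernel N)).
Proof.
rewrite /rhoN (_ : round p = fun rho => normalize (hadamard rho round_kernel)).
  2: by apply/funext => rho; exact: round_hadamard.
apply: iter_normalize_hadamard => [|k].
  have := optr_sigma0_kernelX 0; rewrite /optr /hadamard /hadamardX.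
  under eq_bigr do rewrite mulr1.
  by move=> ->; under eq_bigr do rewrite expr1; rewrite pX_sum1 rmorph1.
by rewrite optr_sigma0_kernelX fmorph_eq0 gt_eqF // sum_powS_gt0 // => n; exact: pX_ge0.
Qed.

Lemma FN_power_share N : FN p N = pX 0 ^+ N.+1 / \sum_n pX n ^+ N.+1.
Proof.
have T_gt0 : 0 < \sum_n pX n ^+ N.+1 by apply: sum_powS_gt0 => // n; exact: pX_ge0.
have sigma0_bell a a' : sigma0 p (a, a) (a', a') = (p 0 0 / 3)%:C.
  by rewrite sigma0_bell_kernel; apply: bell_kernel_bell => m /p0_pure ->; rewrite mul0r rmorph0.
have kernel_bell a a' : round_kernel (a, a) (a', a') = (p 0 0)%:C.
  by apply: bell_kernel_bell => m /p0_pure ->; rewrite rmorph0.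
rewrite /FN rhoN_hadamard fidelityE /normalize optr_sigma0_kernelX /hadamard /hadamardX.
under eq_bigr do under eq_bigr do rewrite sigma0_bell kernel_bell.
rewrite !sumr_const !card_ord -rmorphXn -fmorphV -!rmorphM -!rmorphMn -rmorphM pX0 ReC.
move: T_gt0; generalize (\sum_n pX n ^+ N.+1) => T T_gt0.
by rewrite exprS; field; rewrite gt_eqF.
Qed.

End Qutrit.

Lemma sum_I3 (V : nmodType) (f : I3 -> V) : \sum_i f i = f 0 + f 1 + f 2.
Proof.
by rewrite !big_ord_recr big_ord0 /= add0r; congr (f _ + f _ + f _); apply: val_inj.
Qed.

Lemma I3_neq0P (P : I3 -> Prop) : (forall i, i != 0 -> P i) <-> P 1 /\ P 2.
Proof.
split=> [P_neq0 | [P1 P2] [[|[|[|k]]] lt_i3] //= _]; first by split; apply: P_neq0.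
- by rewrite (_ : Ordinal lt_i3 = 1) //; apply: val_inj.
- by rewrite (_ : Ordinal lt_i3 = 2) //; apply: val_inj.
Qed.

Theorem proposition1 (R : realType) (p : 'I_3 -> 'I_3 -> R)
  (hp0 : forall n m, 0 <= p n m)
  (hp1 : \sum_(n < 3) \sum_(m < 3) p n m = 1)
  (h01 : p 0 1 = 0) (h02 : p 0 2 = 0) :
  (FN p n @[n --> \oo] --> (1 : R)) <->
  p 0 0 > Num.max (p 1 0 + p 1 1 + p 1 2) (p 2 0 + p 2 1 + p 2 2).
Proof.
have p0_pure := proj2 (I3_neq0P (fun m => p 0 m = 0)) (conj h01 h02).
have -> : FN p = fun N => pX p 0 ^+ N.+1 / \sum_n pX p n ^+ N.+1.
  by apply/funext => N; exact: FN_power_share.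
apply: iff_trans (cvg_power_share _ (pX_ge0 hp0) hp1) _.
apply: iff_trans (I3_neq0P (fun i => pX p i < pX p 0)) _.
rewrite pX0 // /pX !sum_I3 gt_max.
by split=> [[-> ->] | /andP[]].
Qed.
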